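(* Let $a:[0,\infty)\to[0,\infty)$ be non-negative and non-decreasing, let $f(x)=\exp\bigl(-\int_0^x a(y)\,dy\bigr)$ for $x\ge 0$ (so that $a=-f'/f$), let $\mathcal L(\gamma)=\int_0^\infty e^{-\gamma x}f(x)\,dx$ and $\gamma_{\min}=\inf\{\gamma\in\mathbb R:\mathcal L(\gamma)<\infty\}$ (so $\gamma_{\min}=-\lim_{x\to\infty}a(x)\in[-\infty,0]$). Fix $s\ge 1$. The stationary distribution of the controlled $s$-server system described in the context exists (i) for the global control, i.e. admission probabilities $p_s(k)$ with $p_s(0)\cdots p_s(n)=f\bigl(\tfrac{n+1}{\sqrt s}\bigr)$ for all $n\in\mathbb N_0$, if and only if $0\le\rho<e^{-\gamma_{\min}/\sqrt s}$ (and $e^{-\gamma_{\min}/\sqrt s}=1-\gamma_{\min}/\sqrt s+O(1/s)$); (ii) for the local control, i.e. $p_s(k)=\bigl(1+\tfrac{1}{\sqrt s}a\bigl(\tfrac{k+1}{\sqrt s}\bigr)\bigr)^{-1}$ for $k\in\mathbb N_0$, if and only if $0\le\rho<1-\gamma_{\min}/\sqrt s$. (Here an upper bound equal to $+\infty$ means that the stationary distribution exists for all $\rho\ge0$.)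
   Context: The system: $s$ parallel servers, customers arrive according to a Poisson process of rate $\lambda=s\rho$, service times are i.i.d. exponential with mean $1$, all interarrival and service times independent. A customer who upon arrival finds all servers busy and $k$ other customers waiting is admitted with probability $p_s(k)$ and rejected otherwise; customers finding an idle server are always admitted. The number of customers in the system is then a birth–death process with birth rate $\lambda$ in states $0,\dots,s-1$, birth rate $\lambda p_s(k-s)$ in states $k\ge s$, and death rate $\min\{k,s\}$ in state $k$. Its stationary distribution, when it exists, is $\pi_k=\pi_0(s\rho)^k/k!$ for $0\le k\le s$ and $\pi_k=\pi_0\frac{s^s\rho^k}{s!}\prod_{i=0}^{k-s-1}p_s(i)$ for $k>s$, with $\pi_0^{-1}=\sum_{k=0}^s\frac{(s\rho)^k}{k!}+\frac{(s\rho)^s}{s!}F_s(\rho)$, where $F_s(\rho)=\sum_{n=0}^\infty p_s(0)\cdots p_s(n)\,\rho^{n+1}$; it exists if and only if $F_s(\rho)<\infty$. *)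

From Stdlib Require Import Reals.
From Coquelicot Require Import Coquelicot.
Open Scope R_scope.

Definition fa (a : R -> R) (x : R) : R := exp (- RInt a 0 x).

(* L(gamma) < oo : the improper integral \int_0^oo e^{-gamma x} f(x) dx
   is finite (integrand positive, so this is convergence). *)
Definition L_finite (a : R -> R) (g : R) : Prop :=
  ex_RInt_gen (fun x => exp (- g * x) * fa a x)
    (at_point 0) (Rbar_locally p_infty).

Definition gamma_min (a : R -> R) : Rbar := Glb_Rbar (L_finite a).

Definition global_bound (a : R -> R) (s : nat) : Rbar :=
  match gamma_min a with
  | Finite g => Finite (exp (- g / sqrt (INR s)))
  | m_infty => p_infty
  | p_infty => Finite 0
  end.

Definition local_bound (a : R -> R) (s : nat) : Rbar :=
  match gamma_min a with
  | Finite g => Finite (1 - g / sqrt (INR s))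
  | m_infty => p_infty
  | p_infty => m_infty
  end.

Fixpoint prefix_prod (p : nat -> R) (n : nat) : R :=
  match n with
  | O => p O
  | S m => prefix_prod p m * p (S m)
  end.

Definition local_control (a : R -> R) (s : nat) (k : nat) : R :=
  / (1 + / sqrt (INR s) * a (INR (S k) / sqrt (INR s))).

(* Birth-death process of the controlled s-server queue, lambda = s rho *)
Definition birth_rate (s : nat) (rho : R) (p : nat -> R) (k : nat) : R :=
  if Nat.ltb k s then INR s * rho else INR s * rho * p (k - s)%nat.

Definition death_rate (s : nat) (k : nat) : R := INR (Nat.min k s).

Definition global_balance (s : nat) (rho : R) (p : nat -> R) (pi : nat -> R) : Prop :=
  forall k : nat,
    pi k * (birth_rate s rho p k + death_rate s k) =
    (match k with O => 0 | S j => pi j * birth_rate s rho p j end)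
    + pi (S k) * death_rate s (S k).

(* The model is a well-defined CTMC (nonnegative rates) and it has a
   stationary distribution: a probability vector on N solving pi Q = 0. *)
Definition stationary_exists (s : nat) (rho : R) (p : nat -> R) : Prop :=
  (forall k, 0 <= birth_rate s rho p k) /\
  exists pi : nat -> R,
    (forall k, 0 <= pi k) /\ is_series pi 1 /\ global_balance s rho p pi.

(* Write A(t) for the integral of a over [0, t] and c for the supremum of a on
   [0, oo).  Monotonicity gives A(t) <= c t, and A(t) >= d t - K for every d < c.
   Hence exp(-g t) f(t) = exp(-g t - A(t)) is at least 1 on [0, oo) when -g >= c
   and decays exponentially when -g < c, so L(g) < oo iff -g < c and
   gamma_min = -c.  Sampling the same function at t = (n+1)/sqrt s with
   g = -sqrt s ln rho shows that the global-control series converges iff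
   sqrt s ln rho < c.  Under the local control the factor
   rho p_s(k) = rho / (1 + a((k+1)/sqrt s)/sqrt s) is eventually below a constant
   < 1 when rho < 1 + c/sqrt s and is at least 1 for every k otherwise.  Finally
   the birth-death chain has a stationary distribution iff its detailed-balance
   weights are summable, and beyond s they are the products
   rho^(n+1) p_s(0) ... p_s(n). *)

From Stdlib Require Import Reals Lra Lia Classical FunctionalExtensionality.
From Coquelicot Require Import Coquelicot.
Open Scope R_scope.

Lemma exp_le_exp (x y : R) : x <= y -> exp x <= exp y.
Proof. intros [Hxy | ->]; [apply Rlt_le, exp_increasing |]; lra. Qed.

Lemma ex_RInt_const_on (f : R -> R) (k u v : R) :
  u <= v -> (forall x, u < x < v -> f x = k) -> ex_RInt f u v.
Proof.
  intros Huv Hf. apply (ex_RInt_ext (fun _ => k)); [| apply ex_RInt_const].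
  intros x. rewrite Rmin_left, Rmax_right by lra. intros Hx. symmetry. now apply Hf.
Qed.

Section NondecreasingIntegrable.

Variable h : R -> R.
Hypothesis h_incr : forall x y, x <= y -> h x <= h y.

Lemma ex_RInt_superlevel_indicator (t u v : R) :
  u <= v -> ex_RInt (fun x => if Rle_dec t (h x) then 1 else 0) u v.
Proof.
  intros Huv.
  set (T := fun x => x = u \/ (x <= v /\ h x < t)).
  assert (T_bound : bound T) by (exists v; intros x [-> | [Hx _]]; lra).
  destruct (completeness T T_bound (ex_intro _ u (or_introl eq_refl))) as [c [Hc_ub Hc_lub]].
  assert (Huc : u <= c) by (apply Hc_ub; now left).
  assert (Hcv : c <= v) by (apply Hc_lub; intros x [-> | [Hx _]]; lra).
  (* [h < t] on [(u, c)] and [t <= h] on [(c, v)]. *)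
  apply ex_RInt_Chasles with c.
  - apply (ex_RInt_const_on _ 0); [lra |]. intros x Hx.
    destruct (classic (exists y, T y /\ x < y)) as [[y [[-> | [_ Hy]] Hxy]] | Hnone].
    + lra.
    + destruct (Rle_dec t (h x)) as [Ht |]; [| reflexivity].
      pose proof (h_incr x y ltac:(lra)). lra.
    + exfalso. enough (c <= x) by lra. apply Hc_lub. intros y Ty.
      apply Rnot_lt_le. intros Hxy. apply Hnone. now exists y.
  - apply (ex_RInt_const_on _ 1); [lra |]. intros x Hx.
    destruct (Rle_dec t (h x)) as [| Ht]; [reflexivity |].
    enough (x <= c) by lra. apply Hc_ub. right. split; [lra | now apply Rnot_le_lt].
Qed.

Fixpoint staircase (m D : R) (N : nat) (y : R) : R :=
  match N with
  | O => m
  | S N' => staircase m D N' y + D * (if Rle_dec (m + INR (S N') * D) y then 1 else 0)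
  end.

Lemma ex_RInt_staircase (m D : R) (N : nat) (u v : R) :
  u <= v -> ex_RInt (fun x => staircase m D N (h x)) u v.
Proof.
  intros Huv. induction N as [| N IH]; simpl.
  - apply ex_RInt_const.
  - apply (ex_RInt_plus (fun x => staircase m D N (h x))); [exact IH |].
    apply (ex_RInt_scal (fun x => if Rle_dec (m + INR (S N) * D) (h x) then 1 else 0)).
    now apply ex_RInt_superlevel_indicator.
Qed.

End NondecreasingIntegrable.

Lemma staircase_spec (m D y : R) (N : nat) : 0 < D -> m <= y ->
  (m + INR N * D <= y -> staircase m D N y = m + INR N * D) /\
  (y < m + INR N * D -> y - D < staircase m D N y <= y).
Proof.
  intros HD Hy. induction N as [| N [IH_full IH_part]].
  - change (INR 0) with 0. split; intros; simpl; lra.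
  - cbn [staircase]. rewrite S_INR.
    destruct (Rle_dec (m + (INR N + 1) * D) y) as [Hle | Hgt].
    + rewrite IH_full by nra. split; intros; lra.
    + split; intros H; [lra |].
      destruct (Rle_lt_dec (m + INR N * D) y) as [H' | H'].
      * rewrite IH_full by exact H'. lra.
      * specialize (IH_part H'). lra.
Qed.

(* The staircases with [S n] steps of height [D n] approximate [h] uniformly
   within [D n]. *)
Lemma ex_RInt_bounded_nondecreasing (h : R -> R) (m M u v : R) :
  (forall x y, x <= y -> h x <= h y) -> (forall x, m <= h x <= M) -> u <= v ->
  ex_RInt h u v.
Proof.
  intros Hh Hb Huv.
  assert (HM : 0 < M + 1 - m) by (specialize (Hb u); lra).
  set (D := fun n : nat => (M + 1 - m) / INR (S n)).
  set (f := fun (n : nat) (x : R) => staircase m (D n) (S n) (h x)).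
  assert (f_unif : filterlim f eventually (locally (h : fct_UniformSpace R R_UniformSpace))).
  { apply filterlim_locally. intros [eps Heps].
    destruct (INR_unbounded ((M + 1 - m) / eps)) as [N HN].
    exists N. intros n Hn t.
    assert (Hn1 : INR N + 1 <= INR (S n)) by (rewrite <- S_INR; apply le_INR; lia).
    assert (HDn : 0 < D n) by (apply Rdiv_lt_0_compat; [lra | apply lt_0_INR; lia]).
    assert (HD_eps : D n < eps).
    { apply Rlt_div_l; [apply lt_0_INR; lia |].
      apply Rlt_div_l in HN; [nra | lra]. }
    assert (Htop : m + INR (S n) * D n = M + 1).
    { unfold D. field. apply not_0_INR. lia. }
    destruct (staircase_spec m (D n) (h t) (S n) HDn (proj1 (Hb t))) as [_ Happrox].
    specialize (Hb t). specialize (Happrox ltac:(lra)).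
    change (Rabs (f n t - h t) < eps). unfold f. apply Rabs_def1; lra. }
  destruct (filterlim_RInt f u v eventually _ h (fun n => RInt (f n) u v)) as [I [_ HI]].
  - intros n. apply RInt_correct. now apply ex_RInt_staircase.
  - exact f_unif.
  - now exists I.
Qed.

Lemma ex_RInt_nondecreasing_on (h : R -> R) (u v : R) : u <= v ->
  (forall x y, u <= x -> x <= y -> y <= v -> h x <= h y) -> ex_RInt h u v.
Proof.
  intros Huv Hh.
  set (clamp := fun x => Rmin v (Rmax u x)).
  assert (clamp_in : forall x, u <= clamp x <= v).
  { intros x. unfold clamp. split.
    - apply Rmin_glb; [lra | apply Rmax_l].
    - apply Rmin_l. }
  assert (clamp_incr : forall x y, x <= y -> clamp x <= clamp y).
  { intros x y Hxy. apply Rle_min_compat_l, Rle_max_compat_l, Hxy. }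
  apply (ex_RInt_ext (fun x => h (clamp x))).
  - intros x. rewrite Rmin_left, Rmax_right by lra. intros Hx.
    unfold clamp. now rewrite Rmax_right, Rmin_right by lra.
  - apply ex_RInt_bounded_nondecreasing with (h u) (h v); [| | exact Huv].
    + intros x y Hxy. apply Hh; try apply clamp_in. now apply clamp_incr.
    + intros x. split; apply Hh; try apply clamp_in; lra.
Qed.

Lemma continuous_of_lipschitz_near (F : R -> R) (x0 M : R) : 0 <= M ->
  (forall y, Rabs (y - x0) < 1 -> Rabs (F y - F x0) <= M * Rabs (y - x0)) ->
  continuous F x0.
Proof.
  intros HM HF. apply filterlim_locally. intros [eps Heps].
  assert (Hd : 0 < Rmin 1 (eps / (M + 1))).
  { apply Rmin_glb_lt; [lra | apply Rdiv_lt_0_compat; lra]. }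
  exists (mkposreal _ Hd). intros y Hy.
  change (Rabs (y - x0) < Rmin 1 (eps / (M + 1))) in Hy.
  change (Rabs (F y - F x0) < eps).
  pose proof (Rmin_l 1 (eps / (M + 1))). pose proof (Rmin_r 1 (eps / (M + 1))).
  apply Rle_lt_trans with (M * Rabs (y - x0)); [apply HF; lra |].
  assert (eps / (M + 1) * (M + 1) = eps) by (field; lra).
  pose proof (Rabs_pos (y - x0)). nra.
Qed.

(* Monotone convergence: the partial integrals increase to their supremum. *)
Lemma ex_RInt_gen_nonneg_bounded (f : R -> R) (M : R) :
  (forall x, 0 <= x -> 0 <= f x) -> (forall B, 0 <= B -> ex_RInt f 0 B) ->
  (forall B, 0 <= B -> RInt f 0 B <= M) ->
  ex_RInt_gen f (at_point 0) (Rbar_locally p_infty).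
Proof.
  intros Hpos Hint Hbnd.
  set (F := fun B => RInt f 0 B).
  assert (Hsub : forall B1 B2, 0 <= B1 <= B2 -> ex_RInt f B1 B2).
  { intros B1 B2 HB.
    apply (@ex_RInt_Chasles_2 R_CompleteNormedModule f 0); [lra | apply Hint; lra]. }
  assert (F_incr : forall B1 B2, 0 <= B1 <= B2 -> F B1 <= F B2).
  { intros B1 B2 HB. unfold F.
    rewrite <- (RInt_Chasles f 0 B1 B2) by (apply Hsub; lra).
    change (RInt f 0 B1 <= RInt f 0 B1 + RInt f B1 B2).
    enough (0 <= RInt f B1 B2) by lra.
    apply RInt_ge_0; [lra | apply Hsub; lra |]. intros x Hx. apply Hpos. lra. }
  set (S := fun y => exists B, 0 <= B /\ y = F B).
  assert (S_bound : bound S) by (exists M; intros y [B [HB ->]]; now apply Hbnd).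
  assert (S_inhabited : exists y, S y) by (exists (F 0), 0; split; [lra | reflexivity]).
  destruct (completeness S S_bound S_inhabited) as [l [Hl_ub Hl_lub]].
  exists l. intros P [[eps Heps] HP].
  assert (Happrox : exists B0, 0 <= B0 /\ l - eps < F B0).
  { apply NNPP. intros Hnone.
    enough (l <= l - eps) by lra.
    apply Hl_lub. intros y [B [HB ->]]. apply Rnot_lt_le. intros HlB.
    apply Hnone. now exists B. }
  destruct Happrox as [B0 [HB0 HFB0]].
  apply (Filter_prod _ _ _ (fun x => x = 0) (fun y => B0 < y));
    [reflexivity | now exists B0 |].
  intros x y -> Hy. exists (F y).
  split; [apply (@RInt_correct R_CompleteNormedModule), Hint; lra |].
  apply HP. change (Rabs (F y - l) < eps).
  assert (F B0 <= F y) by (apply F_incr; lra).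
  assert (F y <= l) by (apply Hl_ub; exists y; split; [lra | reflexivity]).
  apply Rabs_def1; lra.
Qed.

Lemma not_ex_RInt_gen_ge_1 (f : R -> R) :
  (forall x, 0 <= x -> 1 <= f x) -> ~ ex_RInt_gen f (at_point 0) (Rbar_locally p_infty).
Proof.
  intros Hf [l Hl].
  destruct (Hl _ (locally_ball l (mkposreal 1 Rlt_0_1))) as [Q R HQ [M HM] HQR].
  set (y := Rmax M (Rmax (l + 2) 0) + 1).
  assert (Hy : M < y /\ l + 2 < y /\ 0 < y).
  { pose proof (Rmax_l M (Rmax (l + 2) 0)). pose proof (Rmax_r M (Rmax (l + 2) 0)).
    pose proof (Rmax_l (l + 2) 0). pose proof (Rmax_r (l + 2) 0). unfold y. lra. }
  destruct (HQR 0 y HQ (HM y ltac:(lra))) as [z [Hz Hzl]]. simpl in Hz.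
  change (Rabs (z - l) < 1) in Hzl. apply Rabs_def2 in Hzl.
  assert (y <= z); [| lra].
  replace y with (y - 0) by ring.
  apply (is_RInt_le (fun _ => 1) f 0 y); [lra | | exact Hz | intros x Hx; apply Hf; lra].
  replace (y - 0) with (scal (y - 0) 1) by (unfold scal; simpl; unfold mult; simpl; ring).
  apply (@is_RInt_const R_NormedModule).
Qed.

Lemma RInt_exp_neg_le (k B : R) : 0 < k -> 0 <= B -> RInt (fun t => exp (- k * t)) 0 B <= / k.
Proof.
  intros Hk HB.
  assert (HI : is_RInt (fun t => exp (- k * t)) 0 B
                 (minus (- exp (- k * B) / k) (- exp (- k * 0) / k))).
  { apply (is_RInt_derive (fun t => - exp (- k * t) / k)).
    - intros x _. auto_derive; [exact I | field; lra].
    - intros x _. apply (ex_derive_continuous (fun t => exp (- k * t))). auto_derive. exact I. }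
  rewrite (is_RInt_unique _ _ _ _ HI). unfold minus, plus, opp; simpl.
  rewrite Rmult_0_r, exp_0.
  assert (0 < exp (- k * B) / k) by (apply Rdiv_lt_0_compat; [apply exp_pos | lra]).
  unfold Rdiv in *. lra.
Qed.

Lemma not_ex_series_ge_1 (u : nat -> R) : (forall n, 1 <= u n) -> ~ ex_series u.
Proof.
  intros Hu Hs. apply ex_series_lim_0 in Hs.
  pose proof (is_lim_seq_le (fun _ => 1) u 1 0 Hu (is_lim_seq_const 1) Hs). simpl in *. lra.
Qed.

Lemma ex_series_geometric_bound (u : nat -> R) (C q : R) :
  0 <= q < 1 -> (forall n, 0 <= u n <= C * q ^ n) -> ex_series u.
Proof.
  intros Hq Hu. apply (ex_series_le u (fun n => C * q ^ n)).
  - intros n. change (Rabs (u n) <= C * q ^ n). rewrite Rabs_right; [apply Hu |].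
    apply Rle_ge, Hu.
  - apply (ex_series_scal (V := R_NormedModule) C (fun n => q ^ n)).
    apply ex_series_geom. rewrite Rabs_right; lra.
Qed.

Lemma Series_nonneg (u : nat -> R) : (forall n, 0 <= u n) -> ex_series u -> 0 <= Series u.
Proof.
  intros Hu Hs. rewrite <- (Rmult_0_l (Series u)), <- Series_scal_l.
  apply Series_le; [| exact Hs]. intros n. rewrite Rmult_0_l. split; [lra | apply Hu].
Qed.

Lemma prefix_prod_scale (rho : R) (p : nat -> R) (n : nat) :
  prefix_prod (fun k => rho * p k) n = rho ^ S n * prefix_prod p n.
Proof. induction n as [| n IH]; simpl in *; [ring | rewrite IH; ring]. Qed.

Lemma prefix_prod_nonneg (u : nat -> R) :
  (forall k, 0 <= u k) -> forall n, 0 <= prefix_prod u n.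
Proof. intros Hu n. induction n; simpl; [| apply Rmult_le_pos]; auto. Qed.

Lemma prefix_prod_ge_1 (u : nat -> R) : (forall k, 1 <= u k) -> forall n, 1 <= prefix_prod u n.
Proof.
  intros Hu n. induction n as [| n IH]; simpl; [apply Hu |].
  pose proof (Hu (S n)). nra.
Qed.

Lemma pos_of_prefix_prod_pos (p : nat -> R) :
  (forall n, 0 < prefix_prod p n) -> forall k, 0 < p k.
Proof.
  intros Hp [| k]; [exact (Hp 0%nat) |].
  pose proof (Hp (S k)) as HSk. pose proof (Hp k). simpl in HSk.
  destruct (Rlt_le_dec 0 (p (S k))); [assumption | nra].
Qed.

Lemma ex_series_prefix_prod_ratio (u : nat -> R) (q : R) (N : nat) :
  0 <= q < 1 -> (forall k, 0 <= u k) -> (forall k, (N <= k)%nat -> u k <= q) ->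
  ex_series (prefix_prod u).
Proof.
  intros Hq Hu Htail. apply (ex_series_incr_n _ N).
  apply (ex_series_geometric_bound _ (prefix_prod u N) q); [exact Hq |].
  intros m. split; [apply prefix_prod_nonneg, Hu |].
  induction m as [| m IH].
  - rewrite Nat.add_0_r. simpl. lra.
  - rewrite Nat.add_succ_r. simpl prefix_prod. simpl pow.
    pose proof (prefix_prod_nonneg u Hu (N + m)).
    pose proof (Htail (S (N + m)) ltac:(lia)). pose proof (Hu (S (N + m))).
    assert (0 <= prefix_prod u N * q ^ m) by lra.
    nra.
Qed.

Lemma exp_pow (x : R) (n : nat) : exp x ^ n = exp (INR n * x).
Proof. rewrite <- Rpower_pow by apply exp_pos. unfold Rpower. now rewrite ln_exp. Qed.

Lemma sqrt_INR_pos (s : nat) : (1 <= s)%nat -> 0 < sqrt (INR s).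
Proof. intros Hs. apply sqrt_lt_R0, lt_0_INR. lia. Qed.

Lemma Glb_Rbar_lt_iff (E : R -> Prop) :
  (forall x y, E x -> x <= y -> E y) -> (forall x, E x -> exists y, y < x /\ E y) ->
  forall x, E x <-> Rbar_lt (Glb_Rbar E) x.
Proof.
  intros E_up E_open x. destruct (Glb_Rbar_correct E) as [Hlb Hglb]. split.
  - intros Ex. destruct (E_open x Ex) as [y [Hyx Ey]].
    apply Rbar_le_lt_trans with y; [exact (Hlb y Ey) | exact Hyx].
  - intros Hlt. apply NNPP. intros nEx.
    apply (Rbar_lt_not_le _ _ Hlt), Hglb. intros y Ey. simpl.
    apply Rnot_lt_le. intros Hyx. apply nEx, (E_up y); [exact Ey | lra].
Qed.

Lemma lt_local_bound (a : R -> R) (s : nat) (rho : R) : (1 <= s)%nat ->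
  Rbar_lt (Finite rho) (local_bound a s) <->
  Rbar_lt (gamma_min a) (Finite (- (sqrt (INR s) * (rho - 1)))).
Proof.
  intros Hs. pose proof (sqrt_INR_pos s Hs) as Hr. unfold local_bound.
  destruct (gamma_min a) as [g | |]; simpl; [| tauto | tauto].
  replace g with (g / sqrt (INR s) * sqrt (INR s)) at 2 by (field; lra).
  split; intros; nra.
Qed.

Lemma lt_global_bound (a : R -> R) (s : nat) (rho : R) : (1 <= s)%nat -> 0 < rho ->
  Rbar_lt (Finite rho) (global_bound a s) <->
  Rbar_lt (gamma_min a) (Finite (- (sqrt (INR s) * ln rho))).
Proof.
  intros Hs Hrho. pose proof (sqrt_INR_pos s Hs) as Hr. unfold global_bound.
  destruct (gamma_min a) as [g | |]; simpl; [| split; [lra | tauto] | tauto].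
  assert (Hexp : rho < exp (- g / sqrt (INR s)) <-> ln rho < - g / sqrt (INR s)).
  { split; intros H.
    - rewrite <- (ln_exp (- g / sqrt (INR s))). now apply ln_increasing.
    - rewrite <- (exp_ln rho) by exact Hrho. now apply exp_increasing. }
  rewrite Hexp. replace g with (g / sqrt (INR s) * sqrt (INR s)) at 2 by (field; lra).
  unfold Rdiv. rewrite Ropp_mult_distr_l. split; intros; nra.
Qed.

Section BirthDeath.

Variable s : nat.
Hypothesis s_pos : (1 <= s)%nat.
Variable rho : R.
Variable p : nat -> R.
Hypothesis p_nonneg : forall k, 0 <= p k.

(* [weight k] is [pi k / pi 0] for the product-form solution of detailed balance. *)
Fixpoint weight (k : nat) : R :=
  match k with
  | O => 1
  | S k' => weight k' * birth_rate s rho p k' / death_rate s (S k')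
  end.

Lemma death_rate_pos (k : nat) : 0 < death_rate s (S k).
Proof. unfold death_rate. apply lt_0_INR. lia. Qed.

Lemma birth_rate_nonneg_iff : (forall k, 0 <= birth_rate s rho p k) <-> 0 <= rho.
Proof.
  assert (Hs : 0 < INR s) by (apply lt_0_INR; lia).
  split.
  - intros Hb. specialize (Hb 0%nat). unfold birth_rate in Hb.
    replace (Nat.ltb 0 s) with true in Hb by (symmetry; apply Nat.ltb_lt; lia). nra.
  - intros Hrho k. unfold birth_rate. pose proof (p_nonneg (k - s)).
    destruct (Nat.ltb k s); [nra | apply Rmult_le_pos; nra].
Qed.

Lemma global_balance_iff_detailed (pi : nat -> R) :
  global_balance s rho p pi <->
  forall k, pi (S k) * death_rate s (S k) = pi k * birth_rate s rho p k.
Proof.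
  split.
  - intros Hbal k. induction k as [| k IH].
    + specialize (Hbal 0%nat). simpl in Hbal. unfold death_rate in Hbal at 1.
      simpl in Hbal. lra.
    + specialize (Hbal (S k)). lra.
  - intros Hdet [| k].
    + rewrite Hdet. unfold death_rate. simpl. ring.
    + rewrite (Hdet (S k)), <- (Hdet k). ring.
Qed.

Lemma weight_detailed_balance (k : nat) :
  weight (S k) * death_rate s (S k) = weight k * birth_rate s rho p k.
Proof. simpl. pose proof (death_rate_pos k). field. lra. Qed.

Lemma detailed_balance_weight (pi : nat -> R) :
  (forall k, pi (S k) * death_rate s (S k) = pi k * birth_rate s rho p k) ->
  forall k, pi k = pi 0%nat * weight k.
Proof.
  intros Hdet k. induction k as [| k IH]; [simpl; ring |].
  apply (Rmult_eq_reg_r (death_rate s (S k))); [| pose proof (death_rate_pos k); lra].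
  rewrite Hdet, IH, (Rmult_assoc (pi 0%nat) (weight (S k))), weight_detailed_balance. ring.
Qed.

Lemma weight_nonneg : 0 <= rho -> forall k, 0 <= weight k.
Proof.
  intros Hrho k. induction k as [| k IH]; simpl; [lra |].
  apply Rmult_le_pos; [apply Rmult_le_pos; [exact IH | now apply birth_rate_nonneg_iff] |].
  apply Rlt_le, Rinv_0_lt_compat, death_rate_pos.
Qed.

Lemma weight_pos_upto : 0 < rho -> forall k, (k <= s)%nat -> 0 < weight k.
Proof.
  intros Hrho k. induction k as [| k IH]; intros Hk; simpl; [lra |].
  apply Rmult_lt_0_compat; [apply Rmult_lt_0_compat; [apply IH; lia |] |].
  - unfold birth_rate. replace (Nat.ltb k s) with true by (symmetry; apply Nat.ltb_lt; lia).
    apply Rmult_lt_0_compat; [apply lt_0_INR; lia | exact Hrho].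
  - apply Rinv_0_lt_compat, death_rate_pos.
Qed.

(* Beyond [s] all servers are busy: the ratio of consecutive weights is [rho * p (k - s)]. *)
Lemma weight_tail (n : nat) : weight (s + S n) = weight s * prefix_prod (fun k => rho * p k) n.
Proof.
  assert (Hstep : forall k, (s <= k)%nat -> weight (S k) = weight k * (rho * p (k - s))).
  { intros k Hk. simpl. unfold birth_rate, death_rate.
    replace (Nat.ltb k s) with false by (symmetry; apply Nat.ltb_ge; lia).
    replace (Nat.min (S k) s) with s by lia.
    assert (0 < INR s) by (apply lt_0_INR; lia). field. lra. }
  induction n as [| n IH]; rewrite Nat.add_succ_r, Hstep by lia.
  - rewrite Nat.add_0_r, Nat.sub_diag. simpl. ring.
  - rewrite IH. replace (s + S n - s)%nat with (S n) by lia. simpl. ring.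
Qed.

Lemma ex_series_weight_iff : 0 <= rho ->
  ex_series weight <-> ex_series (prefix_prod (fun k => rho * p k)).
Proof.
  intros Hrho. rewrite (ex_series_incr_n weight (S s)).
  assert (Htail : forall n, weight (S s + n) = weight s * prefix_prod (fun k => rho * p k) n).
  { intros n. rewrite <- weight_tail. f_equal. lia. }
  split; intros Hs.
  - destruct Hrho as [Hrho | <-].
    + pose proof (weight_pos_upto Hrho s (le_n s)).
      apply (ex_series_ext (fun n => scal (/ weight s) (weight (S s + n)))).
      * intros n. rewrite Htail. unfold scal; simpl; unfold mult; simpl. field. lra.
      * now apply (ex_series_scal (V := R_NormedModule)).
    + apply (ex_series_geometric_bound _ 0 0); [lra |]. intros n.
      rewrite prefix_prod_scale. simpl. lra.
  - apply (ex_series_ext (fun n => scal (weight s) (prefix_prod (fun k => rho * p k) n))).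
    + intros n. now rewrite Htail.
    + now apply (ex_series_scal (V := R_NormedModule)).
Qed.

Lemma stationary_exists_iff :
  stationary_exists s rho p <-> 0 <= rho /\ ex_series (prefix_prod (fun k => rho * p k)).
Proof.
  split.
  - intros [Hbirth [pi [Hpi_nonneg [Hpi_sum Hbal]]]].
    assert (Hrho : 0 <= rho) by now apply birth_rate_nonneg_iff.
    split; [exact Hrho |]. apply ex_series_weight_iff; [exact Hrho |].
    rewrite global_balance_iff_detailed in Hbal.
    pose proof (detailed_balance_weight pi Hbal) as Hpi.
    assert (Hpi0 : pi 0%nat <> 0).
    { intros H0. apply is_series_unique in Hpi_sum.
      rewrite (Series_ext _ (fun n => 0 * weight n)), Series_scal_l in Hpi_sum; [lra |].
      intros n. now rewrite Hpi, H0. }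
    apply (ex_series_ext (fun n => scal (/ pi 0%nat) (pi n))).
    + intros n. rewrite (Hpi n). change (/ pi 0%nat * (pi 0%nat * weight n) = weight n).
      field. exact Hpi0.
    + apply (ex_series_scal (V := R_NormedModule)). now exists 1.
  - intros [Hrho Hs]. split; [now apply birth_rate_nonneg_iff |].
    apply (ex_series_weight_iff Hrho) in Hs.
    assert (Hsum : 1 <= Series weight).
    { rewrite Series_incr_1 by exact Hs. simpl weight at 1.
      enough (0 <= Series (fun k => weight (S k))) by lra.
      apply Series_nonneg; [intros; now apply weight_nonneg |].
      exact (proj1 (ex_series_incr_1 weight) Hs). }
    exists (fun k => weight k / Series weight). split; [| split].
    + intros k. apply Rdiv_le_0_compat; [now apply weight_nonneg | lra].
    + replace 1 with (/ Series weight * Series weight) by (field; lra).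
      apply (is_series_ext (fun n => scal (/ Series weight) (weight n))).
      * intros n. change (/ Series weight * weight n = weight n / Series weight). field. lra.
      * now apply (is_series_scal (V := R_NormedModule)), Series_correct.
    + apply global_balance_iff_detailed. intros k. unfold Rdiv.
      rewrite !Rmult_assoc, !(Rmult_comm (/ Series weight)), <- !Rmult_assoc.
      now rewrite weight_detailed_balance.
Qed.

End BirthDeath.

Definition below_sup (b : R -> R) (d : R) : Prop := exists x, 0 <= x /\ d < b x.

Definition laplace_integrand (b : R -> R) (g t : R) : R := exp (- g * t) * fa b t.

Section NondecreasingRate.

Variable b : R -> R.
Hypothesis b_nonneg : forall x, 0 <= b x.
Hypothesis b_incr : forall x y, x <= y -> b x <= b y.

Lemma ex_RInt_rate (u v : R) : ex_RInt b u v.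
Proof.
  destruct (Rle_dec u v); [| apply ex_RInt_swap];
    apply ex_RInt_nondecreasing_on; try lra; intros x y _ Hxy _; now apply b_incr.
Qed.

Lemma RInt_rate_Chasles (x y : R) : RInt b 0 y - RInt b 0 x = RInt b x y.
Proof.
  rewrite <- (RInt_Chasles b 0 x y) by apply ex_RInt_rate.
  change (RInt b 0 x + RInt b x y - RInt b 0 x = RInt b x y). ring.
Qed.

Lemma RInt_rate_bounds (x y : R) : x <= y -> b x * (y - x) <= RInt b x y <= b y * (y - x).
Proof.
  intros Hxy.
  assert (RInt_cst : forall c, RInt (fun _ => c) x y = c * (y - x)).
  { intros c. rewrite RInt_const. apply Rmult_comm. }
  rewrite <- !RInt_cst.
  split; apply RInt_le; auto using ex_RInt_rate, ex_RInt_const;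
    intros t Ht; apply b_incr; lra.
Qed.

Lemma RInt_rate_lower (x0 t : R) : 0 <= x0 -> 0 <= t -> b x0 * (t - x0) <= RInt b 0 t.
Proof.
  intros Hx0 Ht.
  pose proof (RInt_rate_bounds 0 x0 Hx0) as [H0 _]. pose proof (b_nonneg 0).
  destruct (Rle_dec x0 t) as [Hle | Hgt].
  - pose proof (RInt_rate_bounds x0 t Hle) as [H1 _].
    pose proof (RInt_rate_Chasles x0 t). nra.
  - pose proof (RInt_rate_bounds 0 t Ht) as [H1 _]. pose proof (b_nonneg x0). nra.
Qed.

Lemma RInt_rate_upper (c t : R) :
  (forall x, 0 <= x -> b x <= c) -> 0 <= t -> RInt b 0 t <= c * t.
Proof.
  intros Hc Ht. pose proof (RInt_rate_bounds 0 t Ht) as [_ H]. specialize (Hc t Ht). nra.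
Qed.

Lemma continuous_RInt_rate (x0 : R) : continuous (RInt b 0) x0.
Proof.
  apply (continuous_of_lipschitz_near _ _ (b (x0 + 1))); [apply b_nonneg |].
  intros y Hy. apply Rabs_def2 in Hy. rewrite RInt_rate_Chasles.
  destruct (Rle_dec x0 y) as [Hle | Hgt].
  - pose proof (RInt_rate_bounds x0 y Hle). pose proof (b_nonneg x0).
    pose proof (b_incr y (x0 + 1) ltac:(lra)).
    rewrite !Rabs_right by nra. nra.
  - rewrite <- opp_RInt_swap by apply ex_RInt_rate.
    pose proof (RInt_rate_bounds y x0 ltac:(lra)). pose proof (b_nonneg y).
    pose proof (b_incr x0 (x0 + 1) ltac:(lra)).
    change (Rabs (- RInt b y x0) <= b (x0 + 1) * Rabs (y - x0)).
    rewrite Rabs_Ropp, (Rabs_right (RInt b y x0)), (Rabs_left1 (y - x0)) by nra. nra.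
Qed.

Lemma continuous_laplace_integrand (g t : R) : continuous (laplace_integrand b g) t.
Proof.
  apply (continuous_mult (fun t => exp (- g * t)) (fa b)).
  - apply (ex_derive_continuous (fun t => exp (- g * t))). auto_derive. exact I.
  - apply (continuous_comp (RInt b 0) (fun y => exp (- y))); [apply continuous_RInt_rate |].
    apply (ex_derive_continuous (fun y => exp (- y))). auto_derive. exact I.
Qed.

Lemma laplace_integrand_pos (g t : R) : 0 < laplace_integrand b g t.
Proof. apply Rmult_lt_0_compat; apply exp_pos. Qed.

Lemma laplace_integrand_decay (g x0 t : R) : 0 <= x0 -> 0 <= t ->
  laplace_integrand b g t <= exp (b x0 * x0) * exp (- (g + b x0) * t).
Proof.
  intros Hx0 Ht. unfold laplace_integrand, fa. rewrite <- !exp_plus. apply exp_le_exp.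
  pose proof (RInt_rate_lower x0 t Hx0 Ht). lra.
Qed.

Lemma laplace_integrand_ge_1 (g t : R) :
  (forall x, 0 <= x -> b x <= - g) -> 0 <= t -> 1 <= laplace_integrand b g t.
Proof.
  intros Hg Ht. unfold laplace_integrand, fa. rewrite <- exp_plus, <- exp_0. apply exp_le_exp.
  pose proof (RInt_rate_upper (- g) t Hg Ht). lra.
Qed.

Lemma not_below_sup (d : R) : ~ below_sup b d -> forall x, 0 <= x -> b x <= d.
Proof. intros Hd x Hx. apply Rnot_lt_le. intros Hlt. apply Hd. now exists x. Qed.

Lemma L_finite_iff (g : R) : L_finite b g <-> below_sup b (- g).
Proof.
  split.
  - intros HL. apply NNPP. intros Hd.
    apply (not_ex_RInt_gen_ge_1 (laplace_integrand b g)); [| exact HL].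
    intros t Ht. apply laplace_integrand_ge_1; [| exact Ht]. now apply not_below_sup.
  - intros [x0 [Hx0 Hlt]].
    set (k := g + b x0). set (C := exp (b x0 * x0)).
    assert (Hk : 0 < k) by (unfold k; lra).
    assert (HC : 0 < C) by apply exp_pos.
    apply (ex_RInt_gen_nonneg_bounded (laplace_integrand b g) (C * / k)).
    + intros t _. apply Rlt_le, laplace_integrand_pos.
    + intros B _. apply (@ex_RInt_continuous R_CompleteNormedModule).
      intros t _. apply continuous_laplace_integrand.
    + intros B HB.
      apply Rle_trans with (RInt (fun t => C * exp (- k * t)) 0 B).
      * apply RInt_le; [exact HB | | |].
        -- apply (@ex_RInt_continuous R_CompleteNormedModule).
           intros t _. apply continuous_laplace_integrand.
        -- apply (@ex_RInt_continuous R_CompleteNormedModule). intros t _.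
           apply (ex_derive_continuous (fun t => C * exp (- k * t))). auto_derive. exact I.
        -- intros t Ht. apply laplace_integrand_decay; lra.
      * rewrite (RInt_scal (V := R_CompleteNormedModule) (fun t => exp (- k * t))).
        -- apply Rmult_le_compat_l; [lra | now apply RInt_exp_neg_le].
        -- apply (@ex_RInt_continuous R_CompleteNormedModule). intros t _.
           apply (ex_derive_continuous (fun t => exp (- k * t))). auto_derive. exact I.
Qed.

Lemma ex_series_global_iff (r rho : R) : 0 < r -> 0 < rho ->
  ex_series (fun n => rho ^ S n * fa b (INR (S n) / r)) <-> below_sup b (r * ln rho).
Proof.
  intros Hr Hrho. set (g := - (r * ln rho)).
  assert (Ht : forall n, 0 <= INR (S n) / r).
  { intros n. apply Rdiv_le_0_compat; [apply pos_INR | lra]. }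
  assert (Hterm : forall n,
    rho ^ S n * fa b (INR (S n) / r) = laplace_integrand b g (INR (S n) / r)).
  { intros n. unfold laplace_integrand, g. f_equal.
    rewrite <- Rpower_pow by exact Hrho. unfold Rpower. f_equal. field. lra. }
  split.
  - intros Hs. apply NNPP. intros Hd. refine (not_ex_series_ge_1 _ _ Hs). intros n.
    rewrite Hterm. apply laplace_integrand_ge_1; [| apply Ht].
    unfold g. rewrite Ropp_involutive. now apply not_below_sup.
  - intros [x0 [Hx0 Hlt]].
    set (k := g + b x0). set (q := exp (- k / r)).
    assert (Hk : 0 < k) by (unfold k, g; lra).
    assert (Hq : 0 <= q < 1).
    { split; [apply Rlt_le, exp_pos |]. rewrite <- exp_0. apply exp_increasing.
      unfold Rdiv. rewrite Ropp_mult_distr_l_reverse.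
      apply Ropp_lt_gt_0_contravar, Rmult_lt_0_compat; [lra | now apply Rinv_0_lt_compat]. }
    apply (ex_series_geometric_bound _ (exp (b x0 * x0) * q) q Hq). intros n.
    rewrite Hterm. split; [apply Rlt_le, laplace_integrand_pos |].
    eapply Rle_trans; [apply laplace_integrand_decay; [exact Hx0 | apply Ht] |].
    replace (exp (b x0 * x0) * q * q ^ n) with (exp (b x0 * x0) * q ^ S n) by (simpl; ring).
    unfold q. rewrite exp_pow. right. unfold k. do 2 f_equal. field. lra.
Qed.

Variable s : nat.
Hypothesis s_pos : (1 <= s)%nat.

Lemma local_control_pos (k : nat) : 0 < local_control b s k.
Proof.
  unfold local_control. apply Rinv_0_lt_compat.
  pose proof (b_nonneg (INR (S k) / sqrt (INR s))).
  pose proof (Rinv_0_lt_compat _ (sqrt_INR_pos s s_pos)). nra.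
Qed.

Lemma ex_series_local_iff (rho : R) : 0 <= rho ->
  ex_series (prefix_prod (fun k => rho * local_control b s k)) <->
  below_sup b (sqrt (INR s) * (rho - 1)).
Proof.
  intros Hrho. pose proof (sqrt_INR_pos s s_pos) as Hr. set (r := sqrt (INR s)) in *.
  assert (Hlc : forall k, rho * local_control b s k = rho / (1 + b (INR (S k) / r) / r)).
  { intros k. unfold local_control, Rdiv. fold r. do 3 f_equal. ring. }
  split.
  - intros Hs. apply NNPP. intros Hd. refine (not_ex_series_ge_1 _ _ Hs).
    apply prefix_prod_ge_1. intros k. rewrite Hlc.
    assert (Hk : b (INR (S k) / r) <= r * (rho - 1)).
    { apply not_below_sup; [exact Hd |]. apply Rdiv_le_0_compat; [apply pos_INR | lra]. }
    assert (b (INR (S k) / r) / r <= rho - 1) by (apply Rle_div_l; lra).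
    pose proof (b_nonneg (INR (S k) / r)).
    assert (0 <= b (INR (S k) / r) / r) by (apply Rdiv_le_0_compat; lra).
    apply Rle_div_r; lra.
  - intros [x0 [Hx0 Hlt]].
    set (D := 1 + b x0 / r).
    assert (HD : rho < D).
    { enough (rho - 1 < b x0 / r) by (unfold D; lra). apply Rlt_div_r; lra. }
    assert (HD1 : 1 <= D).
    { enough (0 <= b x0 / r) by (unfold D; lra).
      apply Rdiv_le_0_compat; [apply b_nonneg | lra]. }
    destruct (INR_unbounded (x0 * r)) as [N HN].
    apply (ex_series_prefix_prod_ratio _ (rho / D) N).
    + split; [apply Rdiv_le_0_compat; lra | apply Rlt_div_l; lra].
    + intros k. apply Rmult_le_pos; [lra | apply Rlt_le, local_control_pos].
    + intros k Hk. rewrite Hlc. unfold Rdiv at 1 3. apply Rmult_le_compat_l; [lra |].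
      apply Rinv_le_contravar; [lra |]. unfold D. apply Rplus_le_compat_l.
      unfold Rdiv. apply Rmult_le_compat_r; [apply Rlt_le, Rinv_0_lt_compat; lra |].
      apply b_incr. apply Rle_div_r; [lra |].
      pose proof (le_INR N (S k) ltac:(lia)). lra.
Qed.

Lemma below_sup_iff_gamma_min (d : R) : below_sup b d <-> Rbar_lt (gamma_min b) (Finite (- d)).
Proof.
  unfold gamma_min.
  rewrite (Glb_Rbar_eqset _ (fun g => below_sup b (- g))) by apply L_finite_iff.
  rewrite <- Glb_Rbar_lt_iff, Ropp_involutive; [reflexivity | |].
  - intros g g' [x [Hx Hlt]] Hg. exists x. split; [exact Hx | lra].
  - intros g [x [Hx Hlt]]. exists ((g - b x) / 2). split; [lra |].
    exists x. split; [exact Hx | lra].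
Qed.

Lemma gamma_min_lt_1 : Rbar_lt (gamma_min b) (Finite 1).
Proof.
  replace 1 with (- - 1) by ring. apply below_sup_iff_gamma_min.
  exists 0. split; [lra |]. pose proof (b_nonneg 0). lra.
Qed.

Lemma stationary_exists_global_iff (p : nat -> R) (rho : R) :
  (forall n, prefix_prod p n = fa b (INR (S n) / sqrt (INR s))) ->
  stationary_exists s rho p <-> 0 <= rho /\ Rbar_lt (Finite rho) (global_bound b s).
Proof.
  intros Hp. pose proof (sqrt_INR_pos s s_pos) as Hr.
  assert (p_pos : forall k, 0 < p k).
  { apply pos_of_prefix_prod_pos. intros n. rewrite Hp. apply exp_pos. }
  rewrite (stationary_exists_iff s s_pos rho p (fun k => Rlt_le _ _ (p_pos k))).
  assert (Hseries : ex_series (prefix_prod (fun k => rho * p k)) <->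
                    ex_series (fun n => rho ^ S n * fa b (INR (S n) / sqrt (INR s)))).
  { split; apply ex_series_ext; intros n; now rewrite prefix_prod_scale, Hp. }
  rewrite Hseries. destruct (Rlt_or_le 0 rho) as [Hrho | Hrho].
  - rewrite lt_global_bound, ex_series_global_iff, below_sup_iff_gamma_min by assumption.
    tauto.
  - split; intros [Hrho0 _]; assert (rho = 0) as -> by lra; split; try lra.
    + unfold global_bound. pose proof gamma_min_lt_1.
      destruct (gamma_min b); simpl in *; [apply exp_pos | contradiction | exact I].
    + apply (ex_series_geometric_bound _ 0 0); [lra |]. intros n.
      rewrite pow_i by lia. lra.
Qed.

Lemma stationary_exists_local_iff (rho : R) :
  stationary_exists s rho (local_control b s) <->
  0 <= rho /\ Rbar_lt (Finite rho) (local_bound b s).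
Proof.
  rewrite (stationary_exists_iff s s_pos rho _ (fun k => Rlt_le _ _ (local_control_pos k))),
    lt_local_bound by exact s_pos.
  split; intros [Hrho H]; split; try exact Hrho.
  - now apply below_sup_iff_gamma_min, ex_series_local_iff.
  - now apply ex_series_local_iff, below_sup_iff_gamma_min.
Qed.

End NondecreasingRate.

Section RestrictionToNonneg.

Variables a b : R -> R.
Hypothesis agree : forall x, 0 <= x -> a x = b x.

Lemma fa_agree (x : R) : 0 <= x -> fa a x = fa b x.
Proof.
  intros Hx. unfold fa. do 2 f_equal. apply RInt_ext.
  rewrite Rmin_left, Rmax_right by exact Hx. intros y Hy. apply agree. lra.
Qed.

Lemma gamma_min_agree : gamma_min a = gamma_min b.
Proof.
  apply Glb_Rbar_eqset. intros g.
  assert (Hpos : forall f1 f2 : R -> R, (forall x, 0 < x -> f1 x = f2 x) ->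
    filter_prod (at_point 0) (Rbar_locally p_infty) (fun ab : R * R =>
      forall x, Rmin (fst ab) (snd ab) < x < Rmax (fst ab) (snd ab) -> f1 x = f2 x)).
  { intros f1 f2 Hf. apply (Filter_prod _ _ _ (fun x => x = 0) (fun y => 0 < y));
      [reflexivity | now exists 0 |].
    intros x y -> Hy z. simpl. rewrite Rmin_left by lra. intros Hz. apply Hf. lra. }
  unfold L_finite. split; apply ex_RInt_gen_ext; apply Hpos; intros x Hx;
    rewrite fa_agree by lra; reflexivity.
Qed.

Lemma local_control_agree (s : nat) : (1 <= s)%nat -> local_control a s = local_control b s.
Proof.
  intros Hs. apply functional_extensionality. intros k. unfold local_control.
  rewrite agree; [reflexivity |].
  apply Rdiv_le_0_compat; [apply pos_INR | now apply sqrt_INR_pos].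
Qed.

Lemma global_bound_agree (s : nat) : global_bound a s = global_bound b s.
Proof. unfold global_bound. now rewrite gamma_min_agree. Qed.

Lemma local_bound_agree (s : nat) : local_bound a s = local_bound b s.
Proof. unfold local_bound. now rewrite gamma_min_agree. Qed.

End RestrictionToNonneg.

(* From [exp x >= 1 + x] and [exp (- x) >= 1 - x]. *)
Lemma exp_sub_linear_bound (x : R) : Rabs (exp x - (1 + x)) <= x ^ 2 * exp (Rabs x).
Proof.
  pose proof (exp_ineq1_le x) as Hlow.
  pose proof (exp_ineq1_le (- x)) as Hlow'.
  assert (Hinv : exp x * exp (- x) = 1) by (rewrite <- exp_plus, Rplus_opp_r; apply exp_0).
  pose proof (exp_pos x).
  assert (Hup : exp x - 1 <= x * exp x) by nra.
  assert (Habs : exp x <= exp (Rabs x)) by (apply exp_le_exp, Rle_abs).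
  assert (Habs1 : 1 <= exp (Rabs x)) by (rewrite <- exp_0; apply exp_le_exp, Rabs_pos).
  rewrite Rabs_right by lra. simpl.
  destruct (Rle_dec 0 x); nra.
Qed.

Lemma exp_expansion_O_inv (g : R) : exists C : R, forall s : nat, (1 <= s)%nat ->
  Rabs (exp (- g / sqrt (INR s)) - (1 - g / sqrt (INR s))) <= C / INR s.
Proof.
  exists (g ^ 2 * exp (Rabs g)). intros s Hs.
  pose proof (sqrt_INR_pos s Hs) as Hr.
  assert (Hr1 : 1 <= sqrt (INR s)).
  { rewrite <- sqrt_1. apply sqrt_le_1_alt. now apply (le_INR 1). }
  assert (Hsq : sqrt (INR s) * sqrt (INR s) = INR s) by (apply sqrt_sqrt, pos_INR).
  set (r := sqrt (INR s)) in *. set (x := - g / r).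
  replace (1 - g / r) with (1 + x) by (unfold x, Rdiv; ring).
  eapply Rle_trans; [apply exp_sub_linear_bound |].
  assert (Hx2 : x ^ 2 = g ^ 2 / INR s) by (unfold x; rewrite <- Hsq; field; lra).
  assert (Hxg : Rabs x <= Rabs g).
  { unfold x, Rdiv. rewrite Rabs_mult, Rabs_Ropp, Rabs_inv, (Rabs_right r) by lra.
    assert (/ r <= 1) by (rewrite <- Rinv_1; apply Rinv_le_contravar; lra).
    pose proof (Rinv_0_lt_compat _ Hr). pose proof (Rabs_pos g). nra. }
  rewrite Hx2. unfold Rdiv. rewrite Rmult_assoc, (Rmult_comm (/ INR s)), <- Rmult_assoc.
  apply Rmult_le_compat_r; [apply Rlt_le, Rinv_0_lt_compat, lt_0_INR; lia |].
  apply Rmult_le_compat_l; [apply pow2_ge_0 | now apply exp_le_exp].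
Qed.

Theorem proposition3p1
  (a : R -> R)
  (Ha_nonneg : forall x, 0 <= x -> 0 <= a x)
  (Ha_mono : forall x y, 0 <= x -> x <= y -> a x <= a y)
  (s : nat) (Hs : (1 <= s)%nat) :
  (* (i) global control *)
  (forall (p : nat -> R),
     (forall n : nat, prefix_prod p n = fa a (INR (S n) / sqrt (INR s))) ->
     forall rho : R,
       stationary_exists s rho p <->
       (0 <= rho /\ Rbar_lt (Finite rho) (global_bound a s)))
  /\
  (* e^{-gamma_min/sqrt s} = 1 - gamma_min/sqrt s + O(1/s) (gamma_min finite) *)
  (forall g : R, gamma_min a = Finite g ->
     exists C : R, forall s' : nat, (1 <= s')%nat ->
       Rabs (exp (- g / sqrt (INR s')) - (1 - g / sqrt (INR s'))) <= C / INR s')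
  /\
  (* (ii) local control *)
  (forall rho : R,
     stationary_exists s rho (local_control a s) <->
     (0 <= rho /\ Rbar_lt (Finite rho) (local_bound a s))).
Proof.
  (* Only the values of [a] on [0, oo) matter, so extend it to a monotone rate on R. *)
  set (b := fun x => a (Rmax 0 x)).
  assert (b_nonneg : forall x, 0 <= b x) by (intros x; apply Ha_nonneg, Rmax_l).
  assert (b_incr : forall x y, x <= y -> b x <= b y).
  { intros x y Hxy. apply Ha_mono; [apply Rmax_l | now apply Rle_max_compat_l]. }
  assert (agree : forall x, 0 <= x -> a x = b x).
  { intros x Hx. unfold b. now rewrite Rmax_right. }
  split; [| split].
  - intros p Hp rho. rewrite (global_bound_agree a b agree).
    apply stationary_exists_global_iff; [exact b_nonneg | exact b_incr | exact Hs |].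
    intros n. rewrite Hp. apply fa_agree; [exact agree |].
    apply Rdiv_le_0_compat; [apply pos_INR | now apply sqrt_INR_pos].
  - intros g _. apply exp_expansion_O_inv.
  - intros rho. rewrite (local_control_agree a b agree s Hs), (local_bound_agree a b agree).
    apply stationary_exists_local_iff; [exact b_nonneg | exact b_incr | exact Hs].
Qed.
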